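(* For the $N$-relay 1-2-1 diamond network (context) with relays operating all in FD or all in HD, $\mathsf{C}_{\rm cs,iid}$ (computed with the state set of that mode) equals the optimal value of the linear program $$\mathrm{P1^d}:\ \max\sum_{p=1}^N x_p\mathsf C_p\ \text{ s.t. }\ 0\le x_p\le1\ \forall p\in[1:N];\quad \sum_{p=1}^N x_p\frac{\mathsf C_p}{\ell_{p,0}}\le1;\quad \sum_{p=1}^N x_p\frac{\mathsf C_p}{\ell_{N+1,p}}\le1,$$ where $\mathsf C_p=\min\{\ell_{p,0},\ell_{N+1,p}\}$ in the FD case and $\mathsf C_p=\frac{\ell_{p,0}\ell_{N+1,p}}{\ell_{p,0}+\ell_{N+1,p}}$ in the HD case.
   Context: Diamond network: nodes $[0:N+1]$, source $0$, destination $N+1$, relays $[1:N]$; the only links are $(0,p)$ and $(p,N+1)$ for $p\in[1:N]$, with positive rational capacities $\ell_{p,0}$ and $\ell_{N+1,p}$; all other $\ell_{j,i}=0$. Network states: a state $s$ consists of sets $s_{i,t}\subseteq[1:N+1]\setminus\{i\}$ and $s_{i,r}\subseteq[0:N]\setminus\{i\}$, each of cardinality at most $1$, for $i\in[0:N+1]$, with $s_{0,r}=s_{N+1,t}=\emptyset$; in FD mode there is no further constraint; in HD mode additionally $|s_{i,t}|+|s_{i,r}|\le1$ for $i\in[1:N]$. $\mathcal S$ is the set of all states of the mode. Link $(i,j)$ is active in $s$ if $j\in s_{i,t}$ and $i\in s_{j,r}$. $\mathsf{C}_{\rm cs,iid}=\max_{\lambda}\min_{\Omega}\sum_{i\in\Omega,\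 j\in\Omega^c}\big(\sum_{s\in\mathcal S:\ (i,j)\text{ active in }s}\lambda_s\big)\ell_{j,i}$, maximum over probability vectors $(\lambda_s)_{s\in\mathcal S}$, minimum over $\Omega$ with $0\in\Omega\subseteq[0:N]$, $\Omega^c=[0:N+1]\setminus\Omega$. *)

From HB Require Import structures.
From mathcomp Require Import all_boot all_order all_algebra.
Set Implicit Arguments. Unset Strict Implicit. Unset Printing Implicit Defensive.
Import Order.TTheory GRing.Theory Num.Theory.
Local Open Scope ring_scope.

Definition node (N : nat) := 'I_(N.+2).
Definition src {N : nat} : node N := ord0.
Definition dst {N : nat} : node N := ord_max.
(* relay p (p : 'I_N, i.e. p in [0:N-1]) is node p+1 in [1:N] *)
Definition relay {N : nat} (p : 'I_N) : node N := inord p.+1.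
Definition is_relay {N : nat} (i : node N) : bool := (0 < i)%N && (i <= N)%N.

Inductive mode := FD | HD.
Definition mode_eqb (m1 m2 : mode) : bool :=
  match m1, m2 with FD, FD | HD, HD => true | _, _ => false end.

(* A state assigns to each node i a pair (s_{i,t}, s_{i,r}) of sets of
   cardinality at most 1, represented as options. *)
Definition state (N : nat) := {ffun node N -> option (node N) * option (node N)}.

Definition valid_state {N : nat} (m : mode) (s : state N) : bool :=
  [forall i : node N,
    [&& (if (s i).1 is Some j then (j != src) && (j != i) else true),
        (if (s i).2 is Some j then (j != dst) && (j != i) else true),
        (i == src) ==> ((s i).2 == None),
        (i == dst) ==> ((s i).1 == None) &
        (mode_eqb m HD && is_relay i) ==>
           ~~ (((s i).1 != None) && ((s i).2 != None))]].

Definition active {N : nat} (s : state N) (i j : node N) : bool :=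
  ((s i).1 == Some j) && ((s j).2 == Some i).

(* ell j i = capacity of link i -> j: ell_{p,0} = a p, ell_{N+1,p} = b p, else 0 *)
Definition ell {R : ringType} {N : nat} (a b : 'I_N -> R) (j i : node N) : R :=
  \sum_(p < N) (((i == src) && (j == relay p))%:R * a p
               + ((i == relay p) && (j == dst))%:R * b p).

Definition cut_value {R : ringType} {N : nat} (m : mode) (a b : 'I_N -> R)
    (lam : state N -> R) (Om : {set node N}) : R :=
  \sum_(i in Om) \sum_(j in ~: Om)
     (\sum_(s : state N | valid_state m s && active s i j) lam s) * ell a b j i.

Definition admissible_cut {N : nat} (Om : {set node N}) : bool :=
  (src \in Om) && (dst \notin Om).

Definition prob_vector {R : numDomainType} {N : nat} (m : mode)
    (lam : state N -> R) : Prop :=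
  (forall s, valid_state m s -> 0 <= lam s) /\
  \sum_(s : state N | valid_state m s) lam s = 1.

Definition is_mincut {R : numDomainType} {N : nat} (m : mode) (a b : 'I_N -> R)
    (lam : state N -> R) (w : R) : Prop :=
  (exists2 Om, admissible_cut Om & cut_value m a b lam Om = w) /\
  (forall Om, admissible_cut Om -> w <= cut_value m a b lam Om).

Definition is_C_cs_iid {R : numDomainType} {N : nat} (m : mode) (a b : 'I_N -> R)
    (v : R) : Prop :=
  (exists lam, prob_vector m lam /\ is_mincut m a b lam v) /\
  (forall lam w, prob_vector m lam -> is_mincut m a b lam w -> w <= v).

Definition Cp {R : numFieldType} {N : nat} (m : mode) (a b : 'I_N -> R) (p : 'I_N) : R :=
  match m with
  | FD => Num.min (a p) (b p)
  | HD => a p * b p / (a p + b p)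
  end.

Definition lp_feasible {R : numFieldType} {N : nat} (m : mode) (a b : 'I_N -> R)
    (x : 'I_N -> R) : Prop :=
  (forall p, 0 <= x p <= 1) /\
  \sum_(p < N) x p * (Cp m a b p / a p) <= 1 /\
  \sum_(p < N) x p * (Cp m a b p / b p) <= 1.

Definition lp_objective {R : numFieldType} {N : nat} (m : mode) (a b : 'I_N -> R)
    (x : 'I_N -> R) : R := \sum_(p < N) x p * Cp m a b p.

Definition is_P1d_opt {R : numFieldType} {N : nat} (m : mode) (a b : 'I_N -> R)
    (v : R) : Prop :=
  (exists x, lp_feasible m a b x /\ lp_objective m a b x = v) /\
  (forall x, lp_feasible m a b x -> lp_objective m a b x <= v).

From mathcomp Require Import all_boot all_order all_algebra.
From mathcomp Require Import ring lra.
Import Order.TTheory GRing.Theory Num.Theory.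
Set Implicit Arguments. Unset Strict Implicit. Unset Printing Implicit Defensive.
Local Open Scope ring_scope.

(* For a probability vector on the states, let α_p and β_p be the probabilities
   that the links source -> p and p -> destination are active.  Every cut of the
   diamond network decides, relay by relay, which of its two links it crosses, so
   the min cut is Σ_p min(α_p ℓ_{p,0}, β_p ℓ_{N+1,p}).  Since the source transmits
   to at most one relay, the destination listens to at most one relay, and a
   half-duplex relay never does both, Σ α ≤ 1, Σ β ≤ 1 and (HD) α_p + β_p ≤ 1;
   hence x_p := min(α_p ℓ_{p,0}, β_p ℓ_{N+1,p}) / C_p is feasible for P1^d with
   the min cut as value.  Conversely a feasible x gives targets
   α_p = x_p C_p / ℓ_{p,0} and β_p = x_p C_p / ℓ_{N+1,p}, which are realised as the
   marginals of a joint law of (relay served by the source, relay serving the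
   destination): the product law in FD and, in HD where α_p + β_p = x_p ≤ 1, a law
   that never picks the same relay twice, built one relay at a time.  The optimum
   of P1^d exists by Fourier-Motzkin elimination, which works over any ordered
   field. *)

Lemma big_option (R : nmodType) (T : finType) (F : option T -> R) :
  \sum_(o : option T) F o = F None + \sum_(x : T) F (Some x).
Proof.
rewrite -big_enum (perm_big (None :: map Some (enum T))) /=.
  by rewrite big_cons big_map big_enum.
apply: uniq_perm; first exact: enum_uniq.
  rewrite /= map_inj_uniq ?enum_uniq ?andbT; last by move=> x y [].
  by apply/mapP=> -[].
by case=> [x|]; rewrite mem_enum inE //= mem_map ?mem_enum //; move=> ? ? [].
Qed.

Lemma sumr_indicator_cond (R : pzSemiRingType) (T : finType) (P : pred T) (x : T) (F : T -> R) :
  \sum_(i | P i) (i == x)%:R * F i = (P x)%:R * F x.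
Proof.
case Px: (P x).
  by rewrite (bigD1 x) //= eqxx mul1r big1 ?addr0 // => i /andP[_ /negbTE ->]; rewrite mul0r.
rewrite big1 ?mul0r // => i Pi; case: eqP => [e|_]; last by rewrite mul0r.
by move: Pi; rewrite e Px.
Qed.

Lemma sumr_indicator (R : pzSemiRingType) (T : finType) (x : T) (F : T -> R) :
  \sum_i (i == x)%:R * F i = F x.
Proof. by rewrite (sumr_indicator_cond predT) mul1r. Qed.

Lemma sumr_exclusive_indicators (R : numDomainType) (I : finType) (f : pred I) :
  (forall p q, f p -> f q -> p = q) -> \sum_p (f p)%:R <= 1 :> R.
Proof.
move=> excl; case: (pickP f) => [p fp|nof]; last by rewrite big1 ?ler01 // => p _; rewrite nof.
rewrite (bigD1 p) //= fp big1 ?addr0 // => q qp; case fq: (f q) => //.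
by move: qp; rewrite (excl _ _ fq fp) eqxx.
Qed.

Lemma ler_sum_term (R : numDomainType) (I : finType) (F : I -> R) p :
  (forall q, 0 <= F q) -> F p <= \sum_q F q.
Proof. by move=> F0; rewrite (bigD1 p) //= lerDl sumr_ge0. Qed.

Lemma ratio_in_unit_interval (R : realFieldType) (u r : R) :
  0 <= u -> u <= r -> 0 <= u / r <= 1 /\ u / r * r = u.
Proof.
move=> u0 ur; have [r0|rn0] := eqVneq r 0.
  have -> : u = 0 by apply/eqP; rewrite eq_le u0 andbT -r0.
  by rewrite r0 mul0r mulr0 lexx ler01.
have r_gt0 : 0 < r by rewrite lt_def rn0 (le_trans u0 ur).
split; last by rewrite divfK.
by rewrite divr_ge0 ?(ltW r_gt0) // ler_pdivrMr // mul1r.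
Qed.

Lemma min_le_harmonic (R : realFieldType) (x y u v : R) :
  0 < u -> 0 < v -> 0 <= x -> 0 <= y -> x + y <= 1 ->
  Num.min (x * u) (y * v) <= u * v / (u + v).
Proof.
move=> u0 v0 x0 y0 xy1; rewrite ler_pdivlMr ?addr_gt0 //.
have wx : Num.min (x * u) (y * v) <= x * u by rewrite ge_min lexx.
have wy : Num.min (x * u) (y * v) <= y * v by rewrite ge_min lexx orbT.
move: (Num.min _ _) wx wy => w wx wy.
apply: (@le_trans _ _ ((x + y) * (u * v))); last by rewrite ler_piMl // mulr_ge0 // ltW.
have -> : (x + y) * (u * v) = y * v * u + x * u * v by ring.
by rewrite mulrDr lerD // ler_wpM2r // ltW.
Qed.

(** * Fourier-Motzkin elimination *)

Section FourierMotzkin.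
Variable R : realFieldType.

Definition constraint n := ({ffun 'I_n -> R} * R)%type.

Definition dotv n (c : {ffun 'I_n -> R}) (z : 'I_n -> R) := \sum_i z i * c i.

Definition solves n (L : seq (constraint n)) (z : 'I_n -> R) :=
  all (fun cd : constraint n => dotv cd.1 z <= cd.2) L.

Lemma eq_dotv n (c : {ffun 'I_n -> R}) z z' : z =1 z' -> dotv c z = dotv c z'.
Proof. by move=> e; apply: eq_bigr => i _; rewrite e. Qed.

Lemma eq_solves n (L : seq (constraint n)) z z' : z =1 z' -> solves L z = solves L z'.
Proof. by move=> e; apply: eq_all => cd; rewrite (eq_dotv _ e). Qed.

Lemma dotv_lincomb n (k k' : R) (c c' : {ffun 'I_n -> R}) z :
  dotv [ffun i => k * c i + k' * c' i] z = k * dotv c z + k' * dotv c' z.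
Proof.
rewrite /dotv !mulr_sumr -big_split; apply: eq_bigr => i _.
by rewrite !ffunE mulrDr !(mulrCA (z i)).
Qed.

Definition init n (z : 'I_n.+1 -> R) : 'I_n -> R := fun i => z (widen_ord (leqnSn n) i).
Definition initf n (c : {ffun 'I_n.+1 -> R}) : {ffun 'I_n -> R} := finfun (init c).
Definition snoc n (z : 'I_n -> R) (s : R) : 'I_n.+1 -> R :=
  fun i => if insub (val i) is Some j then z j else s.
Definition lastc n (cd : constraint n.+1) := cd.1 ord_max.

Lemma dotv_init n (c : {ffun 'I_n.+1 -> R}) z :
  dotv c z = dotv (initf c) (init z) + z ord_max * c ord_max.
Proof. by rewrite /dotv big_ord_recr; congr (_ + _); apply: eq_bigr => i _; rewrite ffunE. Qed.

Lemma init_snoc n (z : 'I_n -> R) s : init (snoc z s) =1 z.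
Proof. by move=> i; rewrite /init /snoc /= valK. Qed.

Lemma snoc_last n (z : 'I_n -> R) s : snoc z s ord_max = s.
Proof. by rewrite /snoc /= insubN ?ltnn. Qed.

Lemma dotv_snoc n (c : {ffun 'I_n.+1 -> R}) z s :
  dotv c (snoc z s) = dotv (initf c) z + s * c ord_max.
Proof. by rewrite dotv_init snoc_last (eq_dotv _ (init_snoc z s)). Qed.

Definition combine n (p q : constraint n.+1) : constraint n :=
  ([ffun i => - lastc q * initf p.1 i + lastc p * initf q.1 i], - lastc q * p.2 + lastc p * q.2).

Definition fm_step n (L : seq (constraint n.+1)) : seq (constraint n) :=
  [seq (initf cd.1, cd.2) | cd <- L & lastc cd == 0] ++
  [seq combine p q | p <- [seq cd <- L | 0 < lastc cd], q <- [seq cd <- L | lastc cd < 0]].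

Lemma fm_step_sound n (L : seq (constraint n.+1)) z :
  solves L z -> solves (fm_step L) (init z).
Proof.
move=> /allP sol; apply/allP => cd; rewrite mem_cat => /orP[].
  case/mapP => c; rewrite mem_filter => /andP[/eqP c0 cL] -> /=.
  by have := sol _ cL; rewrite dotv_init /lastc in c0 *; rewrite c0 mulr0 addr0.
case/allpairsP => [[p q]] /=; rewrite !mem_filter => -[/andP[pp pL] /andP[qn qL] ->].
have := sol _ pL; have := sol _ qL; rewrite /= dotv_lincomb !dotv_init /lastc.
move: pp qn; set cp := p.1 ord_max; set cq := q.1 ord_max => pp qn.
set dp := dotv (initf p.1) _; set dq := dotv (initf q.1) _; set zn := z ord_max.
move=> hq hp; have cq_ge0 : 0 <= - cq by rewrite oppr_ge0 ltW.
have -> : - cq * dp + cp * dq = - cq * (dp + zn * cp) + cp * (dq + zn * cq) by ring.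
exact: lerD (ler_wpM2l cq_ge0 hp) (ler_wpM2l (ltW pp) hq).
Qed.

Definition fm_bound n (z : 'I_n -> R) (cd : constraint n.+1) :=
  (cd.2 - dotv (initf cd.1) z) / lastc cd.

Lemma fm_bound_le n (p q : constraint n.+1) z :
  0 < lastc p -> lastc q < 0 -> dotv (combine p q).1 z <= (combine p q).2 ->
  fm_bound z q <= fm_bound z p.
Proof.
rewrite /= dotv_lincomb /fm_bound => pp qn.
rewrite ler_ndivrMr // mulrAC ler_pdivrMr //.
move: pp qn; set cp := lastc p; set cq := lastc q => pp qn.
lra.
Qed.

Lemma fm_step_complete n (L : seq (constraint n.+1)) z :
  solves (fm_step L) z -> exists s, solves L (snoc z s).
Proof.
move=> /allP sol.
pose up := \big[Num.min/0]_(cd <- L | 0 < lastc cd) fm_bound z cd.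
exists (\big[Num.max/up]_(cd <- L | lastc cd < 0) fm_bound z cd).
apply/allP => cd cdL; rewrite dotv_snoc -/(lastc cd).
case: (ltrgt0P (lastc cd)) => hc.
- have : \big[Num.max/up]_(q <- L | lastc q < 0) fm_bound z q <= fm_bound z cd.
    rewrite big_seq_cond; apply: bigmax_le => [|q /andP[qL qn]]; first exact: ge_bigmin_seq.
    apply: fm_bound_le => //; apply: sol; rewrite mem_cat; apply/orP; right.
    by apply/allpairsP; exists (cd, q); rewrite /= !mem_filter hc qn cdL qL.
  rewrite /fm_bound ler_pdivlMr //; lra.
- have : fm_bound z cd <= \big[Num.max/up]_(q <- L | lastc q < 0) fm_bound z q.
    exact: le_bigmax_seq.
  rewrite /fm_bound ler_ndivrMr //; lra.
- rewrite hc mulr0 addr0; apply: (sol (initf cd.1, cd.2)).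
  by rewrite mem_cat map_f // mem_filter hc eqxx.
Qed.

Lemma fm_project k (L : seq (constraint k.+1)) :
  exists L1 : seq (constraint 1), forall t,
    (exists z, z ord0 = t /\ solves L z) <-> solves L1 (fun _ => t).
Proof.
elim: k L => [|k IH] L.
  exists L => t; split=> [[z [<- sol]]|sol]; last by exists (fun _ => t).
  by rewrite -(eq_solves _ (fun i => congr1 z (ord1 i))).
have [L1 HL1] := IH (fm_step L); exists L1 => t; rewrite -HL1; split.
  case=> z [<- sol]; exists (init z); split; last exact: fm_step_sound.
  by congr z; apply: val_inj.
case=> z [<- sol]; have [s sol'] := fm_step_complete sol.
exists (snoc z s); split=> //.
have -> : ord0 = widen_ord (leqnSn k.+1) ord0 by apply: val_inj.
exact: init_snoc.
Qed.

Lemma dotv1 (c : {ffun 'I_1 -> R}) t : dotv c (fun _ => t) = t * c ord0.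
Proof. by rewrite /dotv big_ord1. Qed.

Lemma solves1_max (L : seq (constraint 1)) t0 B :
  solves L (fun _ => t0) -> (forall t, solves L (fun _ => t) -> t <= B) ->
  exists2 t, solves L (fun _ => t) & forall t', solves L (fun _ => t') -> t' <= t.
Proof.
pose ts := \big[Num.min/B]_(cd <- L | 0 < cd.1 ord0) (cd.2 / cd.1 ord0).
have below t : solves L (fun _ => t) -> t <= B -> t <= ts.
  move=> /allP sol tB; rewrite /ts big_seq_cond; apply: le_bigmin => // cd /andP[cdL c0].
  by rewrite ler_pdivlMr // -dotv1 sol.
move=> sol0 bnd; have t0ts := below _ sol0 (bnd _ sol0).
exists ts => [|t' sol']; last exact: below sol' (bnd _ sol').
apply/allP => cd cdL; rewrite dotv1; case: (ltrP 0 (cd.1 ord0)) => c0.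
  by rewrite -ler_pdivlMr //; apply: ge_bigmin_seq.
apply: le_trans (ler_wnM2r c0 t0ts) _.
by rewrite -dotv1; move/allP: sol0; apply.
Qed.

Definition consf n (t : R) (x : 'I_n -> R) : 'I_n.+1 -> R :=
  fun i => if unlift ord0 i is Some j then x j else t.
Definition tailf n (z : 'I_n.+1 -> R) : 'I_n -> R := fun j => z (lift ord0 j).

Lemma consf0 n t (x : 'I_n -> R) : consf t x ord0 = t.
Proof. by rewrite /consf unlift_none. Qed.

Lemma tailf_consf n t (x : 'I_n -> R) : tailf (consf t x) =1 x.
Proof. by move=> j; rewrite /tailf /consf liftK. Qed.

Lemma dotv_consf n c0 (c : {ffun 'I_n -> R}) z :
  dotv [ffun i => consf c0 c i] z = z ord0 * c0 + dotv c (tailf z).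
Proof.
rewrite /dotv big_ord_recl ffunE consf0; congr (_ + _).
by apply: eq_bigr => i _; rewrite ffunE /consf liftK.
Qed.

Definition epigraph n (L : seq (constraint n)) (c : {ffun 'I_n -> R}) : seq (constraint n.+1) :=
  ([ffun i => consf 1 [ffun j => - c j] i], 0) ::
  [seq ([ffun i => consf 0 cd.1 i], cd.2) | cd : constraint n <- L].

Lemma solves_epigraph n (L : seq (constraint n)) c z :
  solves (epigraph L c) z = (z ord0 <= dotv c (tailf z)) && solves L (tailf z).
Proof.
rewrite /solves /= dotv_consf mulr1 all_map; congr andb.
  have -> : dotv [ffun j => - c j] (tailf z) = - dotv c (tailf z).
    by rewrite /dotv -sumrN; apply: eq_bigr => i _; rewrite ffunE mulrN.
  by rewrite subr_le0.
by apply: eq_all => cd; rewrite /= dotv_consf mulr0 add0r.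
Qed.

Lemma lp_optimum n (L : seq (constraint n)) (c : {ffun 'I_n -> R}) x0 B :
  solves L x0 -> (forall x, solves L x -> dotv c x <= B) ->
  exists2 x, solves L x & forall y, solves L y -> dotv c y <= dotv c x.
Proof.
move=> sol0 bnd; have [L1 HL1] := fm_project (epigraph L c).
have objective_value x : solves L x -> solves L1 (fun _ => dotv c x).
  move=> sol; apply/HL1; exists (consf (dotv c x) x); rewrite consf0; split=> //.
  rewrite solves_epigraph (eq_dotv _ (tailf_consf _ _)) (eq_solves _ (tailf_consf _ _)).
  by rewrite consf0 lexx.
have bnd1 t : solves L1 (fun _ => t) -> t <= B.
  by case/HL1 => z [<-]; rewrite solves_epigraph => /andP[zc /bnd]; apply: le_trans.
have [t solt tmax] := solves1_max (objective_value _ sol0) bnd1.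
have [z [zt]] := proj2 (HL1 t) solt; rewrite solves_epigraph zt => /andP[tz solz].
by exists (tailf z) => // y /objective_value /tmax /le_trans; apply.
Qed.

End FourierMotzkin.

Section UnitBox.
Variable R : realFieldType.

Definition unit_box n : seq (constraint R n) :=
  [seq ([ffun q => - (q == p)%:R], 0) | p <- enum 'I_n] ++
  [seq ([ffun q => (q == p)%:R], 1) | p <- enum 'I_n].

Lemma dotv_delta n (p : 'I_n) (x : 'I_n -> R) : dotv [ffun q => (q == p)%:R] x = x p.
Proof.
rewrite /dotv (eq_bigr (fun q => (q == p)%:R * x q)) ?sumr_indicator //.
by move=> q _; rewrite ffunE mulrC.
Qed.

Lemma solves_unit_box n (x : 'I_n -> R) :
  solves (unit_box n) x <-> forall p, 0 <= x p <= 1.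
Proof.
have dotv_ndelta p : dotv [ffun q => - (q == p)%:R] x = - x p.
  by rewrite -dotv_delta /dotv -sumrN; apply: eq_bigr => q _; rewrite !ffunE mulrN.
rewrite /solves all_cat !all_map; split.
  case/andP => /allP h0 /allP h1 p.
  have := h0 p (mem_index_enum p); have := h1 p (mem_index_enum p).
  by rewrite /= dotv_ndelta dotv_delta oppr_le0 => -> ->.
move=> hx; apply/andP; split; apply/allP => p _ /=.
  by rewrite dotv_ndelta oppr_le0; case/andP: (hx p).
by rewrite dotv_delta; case/andP: (hx p).
Qed.

Lemma dotv_ffun n (u x : 'I_n -> R) : dotv [ffun p => u p] x = \sum_p x p * u p.
Proof. by apply: eq_bigr => p _; rewrite ffunE. Qed.

End UnitBox.

(** * Cuts of the diamond network *)

Section Relays.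
Variable N : nat.
Implicit Types p q : 'I_N.

Lemma val_relay p : val (relay p) = p.+1.
Proof. by rewrite /relay /= inordK // !ltnS ltnW. Qed.

Lemma relay_inj : injective (@relay N).
Proof. by move=> p q /(congr1 val); rewrite !val_relay => -[/val_inj]. Qed.

Lemma relay_eq p q : (relay p == relay q) = (p == q).
Proof. exact: (inj_eq relay_inj). Qed.

Lemma relay_neq_src p : (relay p == src) = false.
Proof. by apply/eqP => /(congr1 val); rewrite val_relay. Qed.

Lemma relay_neq_dst p : (relay p == dst) = false.
Proof.
by apply/eqP => /(congr1 val); rewrite val_relay /= => -[e]; move: (ltn_ord p); rewrite e ltnn.
Qed.

Lemma is_relay_relay p : is_relay (relay p).
Proof. by rewrite /is_relay val_relay ltn_ord. Qed.

End Relays.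

Section Cuts.
Variables (R : realFieldType) (N : nat) (m : mode).
Implicit Types (a b : 'I_N -> R) (lam : state N -> R).

Definition link_share lam (i j : node N) :=
  \sum_(s : state N | valid_state m s && active s i j) lam s.

Lemma cut_value_admissible a b lam Om : admissible_cut Om ->
  cut_value m a b lam Om =
  \sum_p (if relay p \in Om then link_share lam (relay p) dst * b p
          else link_share lam src (relay p) * a p).
Proof.
case/andP => srcOm dstOm; rewrite /cut_value -/(link_share lam).
have ell_split i j : link_share lam i j * ell a b j i =
    \sum_p ((i == src)%:R * ((j == relay p)%:R * (link_share lam i j * a p)) +
            (i == relay p)%:R * ((j == dst)%:R * (link_share lam i j * b p))).
  rewrite /ell mulr_sumr; apply: eq_bigr => p _.
  by case: (i == src); case: (j == relay p); case: (i == relay p); case: (j == dst);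
    rewrite ?mul0r ?mul1r ?mulr0 ?mulr1 ?add0r ?addr0 ?mulrDr ?mulr0.
under eq_bigr do under eq_bigr do rewrite ell_split.
under eq_bigr do rewrite exchange_big.
rewrite exchange_big; apply: eq_bigr => p _.
under eq_bigr do rewrite big_split /= -!mulr_sumr !sumr_indicator_cond.
rewrite big_split /= !sumr_indicator_cond srcOm !in_setC dstOm !mul1r.
by case: (relay p \in Om); rewrite /= ?mul0r ?mul1r ?addr0 ?add0r.
Qed.

Definition mincut_value a b lam :=
  \sum_p Num.min (link_share lam src (relay p) * a p) (link_share lam (relay p) dst * b p).

Lemma is_mincut_value a b lam : is_mincut m a b lam (mincut_value a b lam).
Proof.
pose Om := src |: [set relay p | p in
  [pred p | link_share lam (relay p) dst * b p <= link_share lam src (relay p) * a p]].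
have relay_Om p : (relay p \in Om) =
    (link_share lam (relay p) dst * b p <= link_share lam src (relay p) * a p).
  by rewrite !inE relay_neq_src (mem_imset _ _ (@relay_inj N)).
have adm : admissible_cut Om.
  rewrite /admissible_cut !inE eqxx /=; apply/imsetP => -[p _ e].
  by move: (relay_neq_dst p); rewrite -e eqxx.
split.
  exists Om => //; rewrite cut_value_admissible //; apply: eq_bigr => p _.
  rewrite relay_Om; case: ifP => [le_ba|/negbT]; first by rewrite min_r.
  by rewrite -ltNge => /ltW lt_ab; rewrite min_l.
move=> Om' adm'; rewrite cut_value_admissible //; apply: ler_sum => p _.
by case: (relay p \in Om'); rewrite ge_min lexx ?orbT.
Qed.

Lemma is_mincut_unique a b lam w w' :
  is_mincut m a b lam w -> is_mincut m a b lam w' -> w = w'.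
Proof.
move=> [[Om adm <-] min] [[Om' adm' <-] min'].
by apply/eqP; rewrite eq_le min' // min.
Qed.

End Cuts.



Section ProbabilityVector.
Variables (R : realFieldType) (N : nat) (m : mode) (lam : state N -> R).
Hypothesis lam_prob : prob_vector m lam.

Lemma link_share_ge0 i j : 0 <= link_share m lam i j.
Proof. by case: lam_prob => lam0 _; apply: sumr_ge0 => s /andP[/lam0]. Qed.

Lemma sum_exclusive_link_shares (I : finType) (E : I -> state N -> bool) :
  (forall s, valid_state m s -> forall p q, E p s -> E q s -> p = q) ->
  \sum_p \sum_(s | valid_state m s && E p s) lam s <= 1.
Proof.
case: lam_prob => lam0 lam1 excl.
under eq_bigr do rewrite big_mkcondr /=.
rewrite exchange_big /= -[X in _ <= X]lam1; apply: ler_sum => s vs.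
rewrite (eq_bigr (fun p => (E p s)%:R * lam s)) -?mulr_suml; last first.
  by move=> p _; case: (E p s); rewrite ?mul1r ?mul0r.
by rewrite ler_piMl ?lam0 // sumr_exclusive_indicators // => p q; apply: excl.
Qed.

Lemma sum_link_share_src : \sum_p link_share m lam src (relay p) <= 1.
Proof.
apply: (sum_exclusive_link_shares (E := fun p s => active s src (relay p))) => s _ p q.
by case/andP => /eqP sp _ /andP[/eqP sq _]; move: sq; rewrite sp => -[/relay_inj].
Qed.

Lemma sum_link_share_dst : \sum_p link_share m lam (relay p) dst <= 1.
Proof.
apply: (sum_exclusive_link_shares (E := fun p s => active s (relay p) dst)) => s _ p q.
by case/andP => _ /eqP sp /andP[_ /eqP sq]; move: sq; rewrite sp => -[/relay_inj].
Qed.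

Lemma link_share_src_le1 p : link_share m lam src (relay p) <= 1.
Proof. exact: le_trans (ler_sum_term _ (fun q => link_share_ge0 _ _)) sum_link_share_src. Qed.

Lemma link_share_dst_le1 p : link_share m lam (relay p) dst <= 1.
Proof. exact: le_trans (ler_sum_term _ (fun q => link_share_ge0 _ _)) sum_link_share_dst. Qed.

(* A half-duplex relay cannot receive and transmit in the same state. *)
Lemma link_share_half_duplex p : m = HD ->
  link_share m lam src (relay p) + link_share m lam (relay p) dst <= 1.
Proof.
move=> mHD; have := sum_exclusive_link_shares (E := fun (rx : bool) s =>
  if rx then active s src (relay p) else active s (relay p) dst).
rewrite big_bool; apply=> s /forallP /(_ (relay p)) /and5P[_ _ _ _].
rewrite mHD is_relay_relay /= => hd.
have rx_tx : active s src (relay p) -> active s (relay p) dst -> False.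
  by case/andP => _ /eqP r /andP[/eqP t _]; move: hd; rewrite r t.
by case; case => //= rx tx; [case: (rx_tx rx tx) | case: (rx_tx tx rx)].
Qed.

End ProbabilityVector.

Lemma Cp_gt0 (R : realFieldType) N m (a b : 'I_N -> R) p :
  0 < a p -> 0 < b p -> 0 < Cp m a b p.
Proof.
move=> ha hb; case: m => /=; first by rewrite lt_min ha hb.
by rewrite divr_gt0 ?mulr_gt0 ?addr_gt0.
Qed.

Lemma min_scaled_le_Cp (R : realFieldType) N m (a b : 'I_N -> R) p (x y : R) :
  0 < a p -> 0 < b p -> 0 <= x <= 1 -> 0 <= y <= 1 -> (m = HD -> x + y <= 1) ->
  Num.min (x * a p) (y * b p) <= Cp m a b p.
Proof.
move=> ha hb /andP[x0 x1] /andP[y0 y1]; case: m => [_|/(_ erefl) xy1] /=.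
  have := ler_piMl (ltW ha) x1; have := ler_piMl (ltW hb) y1.
  by rewrite le_min !ge_min => -> ->; rewrite orbT.
exact: min_le_harmonic.
Qed.

Lemma lp_point_of_prob_vector (R : realFieldType) N m (a b : 'I_N -> R) (lam : state N -> R) :
  (forall p, 0 < a p) -> (forall p, 0 < b p) -> prob_vector m lam ->
  exists x, lp_feasible m a b x /\ lp_objective m a b x = mincut_value m a b lam.
Proof.
move=> ha hb lam_prob.
pose al p := link_share m lam src (relay p); pose be p := link_share m lam (relay p) dst.
pose t p := Num.min (al p * a p) (be p * b p).
have C0 p := Cp_gt0 m (ha p) (hb p).
have t0 p : 0 <= t p by rewrite le_min !mulr_ge0 ?link_share_ge0 // ltW.
have t_le_Cp p : t p <= Cp m a b p.
  apply: min_scaled_le_Cp => //; first by rewrite link_share_ge0 // link_share_src_le1.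
    by rewrite link_share_ge0 // link_share_dst_le1.
  by move=> mHD; apply: link_share_half_duplex.
have knapsack (c : 'I_N -> R) (sh : 'I_N -> R) : (forall p, 0 < c p) ->
    (forall p, t p <= sh p * c p) -> \sum_p sh p <= 1 ->
    \sum_p t p / Cp m a b p * (Cp m a b p / c p) <= 1.
  move=> c0 t_le sum1; apply: le_trans sum1; apply: ler_sum => p _.
  by rewrite mulrA divfK ?gt_eqF // ler_pdivrMr.
exists (fun p => t p / Cp m a b p); split; last first.
  by apply: eq_bigr => p _; rewrite divfK ?gt_eqF.
split=> [p|]; first by rewrite /= divr_ge0 ?(ltW (C0 p)) // ler_pdivrMr // mul1r t_le_Cp.
have t_le_a p : t p <= al p * a p by rewrite ge_min lexx.
have t_le_b p : t p <= be p * b p by rewrite ge_min lexx orbT.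
split; [exact: knapsack ha t_le_a (sum_link_share_src lam_prob) |
        exact: knapsack hb t_le_b (sum_link_share_dst lam_prob)].
Qed.

(** * Couplings with prescribed marginals *)

Section Coupling.
Variables (R : realFieldType) (N : nat).
Implicit Types (al be : 'I_N -> R) (M : option 'I_N -> option 'I_N -> R).

Definition coupling al be M :=
  [/\ forall P Q, 0 <= M P Q, \sum_P \sum_Q M P Q = 1,
      forall p, \sum_Q M (Some p) Q = al p & forall q, \sum_P M P (Some q) = be q].

Definition diagonal_free M := forall p, M (Some p) (Some p) = 0.

Lemma eq_coupling al al' be be' M :
  al =1 al' -> be =1 be' -> coupling al be M -> coupling al' be' M.
Proof. by move=> eal ebe [M0 M1 Mr Mc]; split=> // p; rewrite -?eal -?ebe. Qed.

Definition transpose M P Q := M Q P.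

Lemma coupling_transpose al be M : coupling al be M -> coupling be al (transpose M).
Proof.
case=> M0 M1 Mrow Mcol; split=> [P Q||p|q]; rewrite /transpose.
- exact: M0.
- by rewrite exchange_big.
- exact: Mcol.
- exact: Mrow.
Qed.

Lemma coupling_idle_row al be M :
  coupling al be M -> M None None + \sum_q M None (Some q) + \sum_p al p = 1.
Proof.
case=> _ M1 Mrow _; rewrite -M1 [RHS]big_option big_option.
by congr (_ + _); apply: eq_bigr.
Qed.

Lemma coupling_marginal_ge0 al be M p : coupling al be M -> 0 <= al p.
Proof. by case=> M0 _ Mrow _; rewrite -Mrow sumr_ge0. Qed.

Lemma product_coupling al be :
  (forall p, 0 <= al p) -> (forall p, 0 <= be p) -> \sum_p al p <= 1 -> \sum_p be p <= 1 ->
  exists M, coupling al be M.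
Proof.
move=> al0 be0 sal sbe.
pose al' P := if P is Some p then al p else 1 - \sum_p al p.
pose be' Q := if Q is Some q then be q else 1 - \sum_q be q.
have sal' : \sum_P al' P = 1 by rewrite big_option /= subrK.
have sbe' : \sum_Q be' Q = 1 by rewrite big_option /= subrK.
exists (fun P Q => al' P * be' Q); split.
- by move=> [p|] [q|]; rewrite /= ?mulr_ge0 ?subr_ge0.
- by rewrite -[RHS]mulr1 -{1}sal' mulr_suml; apply: eq_bigr => P _; rewrite -mulr_sumr sbe'.
- by move=> p; rewrite -mulr_sumr sbe' mulr1.
- by move=> q; rewrite -mulr_suml sal' mul1r.
Qed.

End Coupling.

Section PairStates.
Variable N : nat.
Implicit Types (P Q : option 'I_N) (p : 'I_N).

(* The source transmits to relay [P] while relay [Q] transmits to the destination. *)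
Definition pair_state P Q : state N :=
  [ffun i => ((if i == src then omap relay P
               else if Q is Some q then (if i == relay q then Some dst else None) else None),
              (if i == dst then omap relay Q
               else if P is Some p then (if i == relay p then Some src else None) else None))].

Lemma active_pair_state_src P Q p : active (pair_state P Q) src (relay p) = (P == Some p).
Proof.
rewrite /active !ffunE /= relay_neq_dst.
case: P => [p'|] //=; rewrite !relay_eq eq_sym.
case: (eqVneq p p') => [->|ne]; rewrite ?eqxx // andbF.
by apply/esym/eqP => -[e]; rewrite e eqxx in ne.
Qed.

Lemma active_pair_state_dst P Q p : active (pair_state P Q) (relay p) dst = (Q == Some p).
Proof.
rewrite /active !ffunE /= relay_neq_src.
case: Q => [q'|] //=; rewrite !relay_eq.
case: (eqVneq p q') => [->|ne]; rewrite ?eqxx //=.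
by apply/esym/eqP => -[e]; rewrite e eqxx in ne.
Qed.

Lemma pair_state_valid m P Q :
  (m = HD -> forall p, P = Some p -> Q != Some p) -> valid_state m (pair_state P Q).
Proof.
move=> hd; apply/forallP => i; rewrite !ffunE /=.
have src_relay p : (src == relay p) = false by rewrite eq_sym relay_neq_src.
have dst_relay p : (dst == relay p) = false by rewrite eq_sym relay_neq_dst.
have [->|nsrc] := eqVneq i src.
  by case: P hd => [p|] hd /=; rewrite ?eqxx ?andbT ?src_relay ?relay_neq_src ?implybT.
have [->|ndst] := eqVneq i dst.
  by case: Q hd => [q|] hd /=; rewrite ?eqxx ?andbT ?dst_relay ?relay_neq_dst ?implybT ?implybF.
case: Q hd => [q|] hd; case: P hd => [p|] hd /=.
  all: try (have [iq|niq] := eqVneq i (relay q)); try (have [ip|nip] := eqVneq i (relay p));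
  rewrite /= ?iq ?ip ?eqxx ?src_relay ?dst_relay ?relay_neq_src ?relay_neq_dst
    ?implybT ?andbF ?andbT //.
have pq : p = q by apply: relay_inj; rewrite -ip iq.
by case: m hd => //= /(_ erefl p erefl); rewrite pq eqxx.
Qed.

End PairStates.

Section PairWeights.
Variables (R : realFieldType) (N : nat) (m : mode).
Implicit Types (M : option 'I_N -> option 'I_N -> R).

Definition pair_weights M (s : state N) : R :=
  \sum_P \sum_Q M P Q * (s == pair_state P Q)%:R.

Lemma sum_pair_weights M (B : pred (state N)) :
  \sum_(s | B s) pair_weights M s = \sum_P \sum_Q M P Q * (B (pair_state P Q))%:R.
Proof.
rewrite exchange_big; apply: eq_bigr => P _; rewrite exchange_big; apply: eq_bigr => Q _.
rewrite -mulr_sumr (eq_bigr (fun s => (s == pair_state P Q)%:R * 1)) ?sumr_indicator_cond ?mulr1 //.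
by move=> s _; rewrite mulr1.
Qed.

Lemma pair_weights_spec al be M : coupling al be M -> (m = HD -> diagonal_free M) ->
  [/\ prob_vector m (pair_weights M),
      forall p, link_share m (pair_weights M) src (relay p) = al p &
      forall p, link_share m (pair_weights M) (relay p) dst = be p].
Proof.
move=> [M0 M1 Mrow Mcol] Mdiag.
have on_valid P Q (c : bool) : M P Q * (valid_state m (pair_state P Q) && c)%:R = M P Q * c%:R.
  case: (boolP (valid_state m (pair_state P Q))) => // /negP invalid.
  case: m Mdiag invalid => [_|Mdiag]; first by case; apply: pair_state_valid.
  case: P => [p|]; last by case; apply: pair_state_valid.
  case: (eqVneq Q (Some p)) => [->|Qp]; first by rewrite Mdiag // !mul0r.
  by case; apply: pair_state_valid => _ p' [<-].
split.
- split=> [s _|]; first by apply: sumr_ge0 => P _; apply: sumr_ge0 => Q _; rewrite mulr_ge0.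
  rewrite sum_pair_weights -[RHS]M1; apply: eq_bigr => P _; apply: eq_bigr => Q _.
  by rewrite -[valid_state _ _]andbT on_valid mulr1.
- move=> p; rewrite /link_share sum_pair_weights -Mrow.
  rewrite -(sumr_indicator (Some p) (fun P => \sum_Q M P Q)).
  apply: eq_bigr => P _; rewrite mulr_sumr; apply: eq_bigr => Q _.
  by rewrite on_valid active_pair_state_src mulrC.
- move=> p; rewrite /link_share sum_pair_weights -Mcol; apply: eq_bigr => P _.
  rewrite -(sumr_indicator (Some p) (M P)); apply: eq_bigr => Q _.
  by rewrite on_valid active_pair_state_dst mulrC.
Qed.

End PairWeights.

(* [z] is the mass of the idle state of a coupling whose marginals have total
   masses [s] and [t]; a new relay with marginals [a] and [b] takes [x0] and [y0]
   of it, and the rest of [a] (resp. [b]) from the other entries of the idle row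
   (resp. column). *)
Lemma split_idle_mass (R : realFieldType) (a b s t : R) :
  0 <= a -> 0 <= b -> 0 <= s -> 0 <= t -> s + a <= 1 -> t + b <= 1 -> a + b <= 1 ->
  let z := Num.max 0 (1 - s - t) in
  exists x0 y0, [/\ 0 <= x0 <= a, 0 <= y0 <= b, a - x0 <= 1 - z - s, b - y0 <= 1 - z - t &
    z - x0 - y0 = Num.max 0 (1 - (s + a) - (t + b))].
Proof.
move=> a0 b0 s0 t0 sa tb ab z.
case: (lerP (1 - s - t) 0) => c1.
  rewrite /z max_l; last by lra.
  by rewrite max_l; [exists 0, 0; split; rewrite ?lexx ?a0 ?b0 //; lra | lra].
rewrite /z max_r; last by lra.
case: (lerP (1 - s - t) (a + b)) => c2; last first.
  by rewrite max_r; [exists a, b; split; try (apply/andP; split); lra | lra].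
rewrite max_l; last by lra.
case: (lerP (a - t) (1 - s - t - b)) => c3.
  case: (lerP 0 (1 - s - t - b)) => c4.
    by exists (1 - s - t - b), b; split; try (apply/andP; split); lra.
  by exists 0, (1 - s - t); split; try (apply/andP; split); lra.
case: (lerP 0 (a - t)) => c4.
  by exists (a - t), (1 - s - a); split; try (apply/andP; split); lra.
by exists 0, (1 - s - t); split; try (apply/andP; split); lra.
Qed.

Section AddRelay.
Variables (R : realFieldType) (N : nat).
Implicit Types (M : option 'I_N -> option 'I_N -> R).

(* Give relay [k] (unused by [M]) the entries [x0] and [y0] of the idle state, a
   fraction [f] of the rest of the idle row and a fraction [g] of the rest of the
   idle column. *)
Definition add_relay M (k : 'I_N) (x0 y0 f g : R) P Q : R :=
  match P, Q with
  | None, None => M None None - x0 - y0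
  | Some p, None => if p == k then x0 else M P None * (1 - g)
  | None, Some q => if q == k then y0 else M None Q * (1 - f)
  | Some p, Some q => if p == k then (if q == k then 0 else M None Q * f)
                      else if q == k then M P None * g else M P Q
  end.

Lemma add_relay_transpose M k x0 y0 f g P Q :
  add_relay M k x0 y0 f g Q P = add_relay (transpose M) k y0 x0 g f P Q.
Proof.
case: P => [p|]; case: Q => [q|] //=; rewrite /transpose.
- by case: (q == k); case: (p == k).
- by rewrite -!addrA [- _ + _]addrC.
Qed.

Lemma add_relay_row_other M k x0 y0 f g p : p != k -> M (Some p) (Some k) = 0 ->
  \sum_Q add_relay M k x0 y0 f g (Some p) Q = \sum_Q M (Some p) Q.
Proof.
move=> pk Mpk; rewrite !big_option /= (negbTE pk).
rewrite (bigD1 k) //= eqxx [in RHS](bigD1 k) //= Mpk add0r addrA -mulrDr subrK mulr1.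
by congr (_ + _); apply: eq_bigr => q /negbTE ->.
Qed.

Lemma add_relay_row_new M k x0 y0 f g : M None (Some k) = 0 ->
  \sum_Q add_relay M k x0 y0 f g (Some k) Q = x0 + f * \sum_q M None (Some q).
Proof.
move=> Mk; rewrite big_option /= eqxx; congr (_ + _).
rewrite (bigD1 k) //= eqxx add0r [in RHS](bigD1 k) //= Mk add0r mulr_sumr.
by apply: eq_bigr => q /negbTE ->; rewrite mulrC.
Qed.

Lemma add_relay_row_idle M k x0 y0 f g : M None (Some k) = 0 ->
  \sum_Q add_relay M k x0 y0 f g None Q = M None None - x0 + (1 - f) * \sum_q M None (Some q).
Proof.
move=> Mk; rewrite big_option /= (bigD1 k) //= eqxx [in RHS](bigD1 k) //= Mk add0r mulr_sumr.
rewrite (eq_bigr (fun q => (1 - f) * M None (Some q))) => [|q /negbTE /= ->]; last exact: mulrC.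
by ring.
Qed.

Lemma add_relay_total M k x0 y0 f g :
  (forall Q, M (Some k) Q = 0) -> (forall P, M P (Some k) = 0) ->
  \sum_P \sum_Q add_relay M k x0 y0 f g P Q = \sum_P \sum_Q M P Q.
Proof.
move=> rowk colk.
have rows : \sum_p \sum_Q add_relay M k x0 y0 f g (Some p) Q =
    x0 + f * \sum_q M None (Some q) + \sum_(p | p != k) \sum_Q M (Some p) Q.
  rewrite (bigD1 k) //= add_relay_row_new //; congr (_ + _).
  by apply: eq_bigr => p pk; exact: add_relay_row_other.
have rows' : \sum_p \sum_Q M (Some p) Q = \sum_(p | p != k) \sum_Q M (Some p) Q.
  by rewrite (bigD1 k) //= big1 // add0r.
rewrite [LHS]big_option [RHS]big_option add_relay_row_idle // rows rows' (big_option (M None)).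
by ring.
Qed.

End AddRelay.

Section DiagonalFreeCoupling.
Variables (R : realFieldType) (N : nat).
Implicit Types (al be : 'I_N -> R) (M : option 'I_N -> option 'I_N -> R).

Definition update al k (x : R) p := if p == k then x else al p.

Lemma sum_update al k x : al k = 0 -> \sum_p update al k x p = \sum_p al p + x.
Proof.
move=> alk; rewrite (bigD1 k) // [in RHS](bigD1 k) //= /update eqxx alk add0r addrC.
by congr (_ + _); apply: eq_bigr => p /negbTE ->.
Qed.

Definition idle_mass al be : R := Num.max 0 (1 - \sum_p al p - \sum_p be p).

Lemma coupling_unused_relay al be M k :
  coupling al be M -> al k = 0 -> be k = 0 ->
  (forall Q, M (Some k) Q = 0) /\ (forall P, M P (Some k) = 0).
Proof.
move=> [M0 _ Mrow Mcol] alk bek; split=> [Q|P].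
  by apply/eqP; move: (Mrow k); rewrite alk => /eqP; rewrite psumr_eq0 // => /allP/(_ Q); apply.
by apply/eqP; move: (Mcol k); rewrite bek => /eqP; rewrite psumr_eq0 // => /allP/(_ P); apply.
Qed.

Lemma coupling_add_relay al be M k a b :
  coupling al be M -> diagonal_free M -> M None None = idle_mass al be ->
  al k = 0 -> be k = 0 -> 0 <= a -> 0 <= b ->
  \sum_p al p + a <= 1 -> \sum_p be p + b <= 1 -> a + b <= 1 ->
  exists M', [/\ coupling (update al k a) (update be k b) M', diagonal_free M' &
                 M' None None = idle_mass (update al k a) (update be k b)].
Proof.
move=> cM Mdiag Midle alk bek a0 b0 sa sb ab.
have [rowk colk] := coupling_unused_relay cM alk bek.
have s0 : 0 <= \sum_p al p by apply: sumr_ge0 => p _; apply: coupling_marginal_ge0 cM.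
have t0 : 0 <= \sum_p be p.
  by apply: sumr_ge0 => p _; apply: coupling_marginal_ge0 (coupling_transpose cM).
have er := coupling_idle_row cM; have ec := coupling_idle_row (coupling_transpose cM).
case: cM => M0 M1 Mrow Mcol.
rewrite /idle_mass !sum_update // in Midle *; rewrite /transpose in ec.
set s := \sum_p al p in sa s0 er Midle *; set t := \sum_p be p in sb t0 ec Midle *.
set r := \sum_q M None (Some q) in er *; set c := \sum_p M (Some p) None in ec *.
have [x0 [y0 [/andP[x00 x0a] /andP[y00 y0b] hr hc hz]]] := split_idle_mass a0 b0 s0 t0 sa sb ab.
rewrite -Midle in hr hc hz.
have [/andP[f0 f1] ef] : 0 <= (a - x0) / r <= 1 /\ (a - x0) / r * r = a - x0.
  by apply: ratio_in_unit_interval; lra.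
have [/andP[g0 g1] eg] : 0 <= (b - y0) / c <= 1 /\ (b - y0) / c * c = b - y0.
  by apply: ratio_in_unit_interval; lra.
move: f0 f1 ef g0 g1 eg; set f := (a - x0) / r; set g := (b - y0) / c => f0 f1 ef g0 g1 eg.
exists (add_relay M k x0 y0 f g); split; last first.
- by rewrite /= hz.
- by move=> p /=; case: (p == k).
split.
- case=> [p|] [q|] /=.
  + by case: (p == k); case: (q == k); rewrite ?lexx // mulr_ge0.
  + by case: (p == k) => //; rewrite mulr_ge0 // subr_ge0.
  + by case: (q == k) => //; rewrite mulr_ge0 // subr_ge0.
  + by rewrite hz le_max lexx.
- by rewrite add_relay_total.
- move=> p; rewrite /update; case: (eqVneq p k) => [->|pk].
    by rewrite add_relay_row_new ?colk // -/r ef addrC subrK.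
  by rewrite add_relay_row_other ?colk.
- move=> q; rewrite (eq_bigr _ (fun P _ => add_relay_transpose M k x0 y0 f g (Some q) P)).
  rewrite /update; case: (eqVneq q k) => [->|qk].
    by rewrite add_relay_row_new /transpose ?rowk // -/c eg addrC subrK.
  by rewrite add_relay_row_other /transpose ?rowk.
Qed.

Definition truncate al n (p : 'I_N) : R := if (p < n)%N then al p else 0.

Lemma truncate_succ al n (k : 'I_N) : val k = n ->
  truncate al n.+1 =1 update (truncate al n) k (al k).
Proof.
move=> kn p; rewrite /truncate /update ltnS leq_eqVlt -kn.
by case: (eqVneq p k) => [->|pk]; rewrite ?eqxx //= val_eqE (negbTE pk).
Qed.

Lemma diagonal_free_coupling al be :
  (forall p, 0 <= al p) -> (forall p, 0 <= be p) -> \sum_p al p <= 1 -> \sum_p be p <= 1 ->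
  (forall p, al p + be p <= 1) -> exists2 M, coupling al be M & diagonal_free M.
Proof.
move=> al0 be0 sal sbe ab.
have sum_truncate f n : (forall p, 0 <= f p) -> \sum_p truncate f n p <= \sum_p f p.
  by move=> f0; apply: ler_sum => p _; rewrite /truncate; case: ifP.
have partial n : (n <= N)%N -> exists M, [/\ coupling (truncate al n) (truncate be n) M,
    diagonal_free M & M None None = idle_mass (truncate al n) (truncate be n)].
  elim: n => [_|n IH ltnN].
    exists (fun P Q => ((P == None) && (Q == None))%:R); split=> //.
    - split=> [P Q|||p]; first by case: (_ && _); rewrite ?ler01.
      + by rewrite !big_option /= !big1_eq !addr0.
      + by move=> p; rewrite big1.
      + by rewrite big1 // => -[].
    - by rewrite /idle_mass !big1 // subr0 subr0 max_r ?ler01.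
  pose k := Ordinal ltnN; have [M [cM dM iM]] := IH (ltnW ltnN).
  have trunc_k f : truncate f n k = 0 by rewrite /truncate ltnn.
  have trunc_succ f := @truncate_succ f n k erefl.
  have succ_le1 f : (forall p, 0 <= f p) -> \sum_p f p <= 1 ->
      \sum_p truncate f n p + f k <= 1.
    move=> f0 sf; rewrite -(sum_update (f k) (trunc_k f)).
    rewrite -(eq_bigr _ (fun p _ => trunc_succ f p)).
    exact: le_trans (sum_truncate _ _ f0) sf.
  have [M' [cM' dM' iM']] := coupling_add_relay cM dM iM (trunc_k al) (trunc_k be)
    (al0 k) (be0 k) (succ_le1 _ al0 sal) (succ_le1 _ be0 sbe) (ab k).
  exists M'; split=> //.
    by apply: eq_coupling cM' => p; rewrite trunc_succ.
  by rewrite iM' /idle_mass !(eq_bigr _ (fun p _ => esym (trunc_succ _ p))).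
have [M [cM dM _]] := partial N (leqnn N).
by exists M => //; apply: eq_coupling cM => p; rewrite /truncate ltn_ord.
Qed.

End DiagonalFreeCoupling.

Section P1d.
Variables (R : realFieldType) (N : nat) (m : mode) (a b : 'I_N -> R).
Hypotheses (a_gt0 : forall p, 0 < a p) (b_gt0 : forall p, 0 < b p).

Let weights (w : 'I_N -> R) : {ffun 'I_N -> R} := [ffun p => Cp m a b p / w p].


Lemma lp_feasible_solves x :
  lp_feasible m a b x <-> solves (unit_box R N ++ [:: (weights a, 1); (weights b, 1)]) x.
Proof.
rewrite /solves all_cat -/(solves _ x) /= !dotv_ffun andbT; split.
  by case=> box [ka kb]; rewrite ka kb !andbT; apply/solves_unit_box.
by case/and3P => /solves_unit_box box ka kb.
Qed.

Lemma P1d_optimum :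
  exists2 x, lp_feasible m a b x &
    forall y, lp_feasible m a b y -> lp_objective m a b y <= lp_objective m a b x.
Proof.
have C0 p := Cp_gt0 m (a_gt0 p) (b_gt0 p).
have feasible0 : lp_feasible m a b (fun _ => 0).
  by split=> [p|]; [rewrite lexx ler01 | split; rewrite big1 ?ler01 // => p _; rewrite mul0r].
have bounded y : lp_feasible m a b y -> dotv [ffun p => Cp m a b p] y <= \sum_p Cp m a b p.
  case=> box _; rewrite dotv_ffun; apply: ler_sum => p _.
  by case/andP: (box p) => _ y1; rewrite ler_piMl // ltW.
have [x /lp_feasible_solves feas opt] := lp_optimum (proj1 (lp_feasible_solves _) feasible0)
  (fun y sol => bounded y (proj2 (lp_feasible_solves y) sol)).
exists x => // y /lp_feasible_solves /opt.
by rewrite !dotv_ffun.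
Qed.

Lemma prob_vector_of_lp_point x : lp_feasible m a b x ->
  exists lam, prob_vector m lam /\ mincut_value m a b lam = lp_objective m a b x.
Proof.
case=> box [ka kb].
pose al p := x p * (Cp m a b p / a p); pose be p := x p * (Cp m a b p / b p).
have C0 p := Cp_gt0 m (a_gt0 p) (b_gt0 p).
have al0 p : 0 <= al p by case/andP: (box p) => x0 _; rewrite mulr_ge0 // divr_ge0 // ltW.
have be0 p : 0 <= be p by case/andP: (box p) => x0 _; rewrite mulr_ge0 // divr_ge0 // ltW.
have [M cM Mdiag] : exists2 M, coupling al be M & (m = HD -> diagonal_free M).
  case: m @al @be ka kb al0 be0 => al be ka kb al0 be0.
    by have [M cM] := product_coupling al0 be0 ka kb; exists M.
  have al_be_le1 p : al p + be p <= 1.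
    have ap := a_gt0 p; have bp := b_gt0 p.
    have -> : al p + be p = x p by rewrite /al /be /=; field; rewrite ?gt_eqF ?addr_gt0.
    by case/andP: (box p).
  by have [M cM Mdiag] := diagonal_free_coupling al0 be0 ka kb al_be_le1; exists M.
have [lam_prob link_share_src link_share_dst] := pair_weights_spec cM Mdiag.
exists (pair_weights M); split=> //.
apply: eq_bigr => p _; rewrite link_share_src link_share_dst /al /be !mulrA !divfK ?gt_eqF //.
exact: minxx.
Qed.

End P1d.

Theorem lemma4 (R : realFieldType) (N : nat) (m : mode) (a b : 'I_N -> rat)
    (ha : forall p, 0 < a p) (hb : forall p, 0 < b p) :
  exists v : R,
    is_C_cs_iid m (fun p => ratr (a p)) (fun p => ratr (b p)) v /\
    is_P1d_opt m (fun p => ratr (a p)) (fun p => ratr (b p)) v.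
Proof.
set a' : 'I_N -> R := fun p => ratr (a p); set b' : 'I_N -> R := fun p => ratr (b p).
have ha' p : 0 < a' p by rewrite ltr0q.
have hb' p : 0 < b' p by rewrite ltr0q.
have [x feas opt] := P1d_optimum m ha' hb'.
exists (lp_objective m a' b' x); split; last by split=> //; exists x.
split.
  have [lam [lam_prob cut]] := prob_vector_of_lp_point ha' hb' feas.
  by exists lam; rewrite -cut; split=> //; apply: is_mincut_value.
move=> lam w lam_prob /(is_mincut_unique (is_mincut_value _ _ _ _)) <-.
have [y [feas_y <-]] := lp_point_of_prob_vector ha' hb' lam_prob.
exact: opt.
Qed.
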